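(* Let $T$ be a finite tree and let $L$ be the set of pendant edges of $T$. Then $\mathrm{gp_e}(T) = |L|$.
   Context: A pendant vertex is a vertex of degree one; a pendant edge is an edge incident to a pendant vertex. A set $S$ of edges of a graph $G$ is an edge general position set if no geodesic (shortest path) of $G$ contains three edges of $S$; $\mathrm{gp_e}(G)$ is the maximum cardinality of an edge general position set of $G$. *)

From mathcomp Require Import all_boot.
From mathcomp Require Import boolp.
Set Implicit Arguments. Unset Strict Implicit. Unset Printing Implicit Defensive.

Section Graphs.
Variable V : finType.
Variable e : rel V.

Definition simple_graph : Prop := symmetric e /\ irreflexive e.

Definition edgeb (f : {set V}) : bool :=
  [exists x, exists y, e x y && (f == [set x; y])].
Definition edges : {set {set V}} := [set f | edgeb f].

Definition degree (x : V) : nat := #|[set y | e x y]|.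

Definition pendant_edges : {set {set V}} :=
  [set f in edges | [exists x in f, degree x == 1]].

Definition connected_graph : Prop := forall x y : V, connect e x y.
Definition acyclic : Prop :=
  forall c : seq V, 3 <= size c -> uniq c -> ~~ cycle e c.
Definition is_tree : Prop := simple_graph /\ connected_graph /\ acyclic.

(* A walk x :: p (vertices x = x_0, x_1, ..., x_k); its edges {x_i, x_{i+1}}. *)
Definition walk_edges (x : V) (p : seq V) : seq {set V} :=
  pairmap (fun a b => [set a; b]) x p.

Definition geodesic (x : V) (p : seq V) : Prop :=
  path e x p /\
  forall q : seq V, path e x q -> last x q = last x p -> size p <= size q.

Definition edge_gp_set (S : {set {set V}}) : Prop :=
  S \subset edges /\
  forall (x : V) (p : seq V), geodesic x p ->
    #|[set f in S | f \in walk_edges x p]| < 3.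

Definition gpe : nat := \max_(S : {set {set V}} | `[< edge_gp_set S >]) #|S|.

End Graphs.

From mathcomp Require Import all_boot.
From mathcomp Require Import boolp zify.
Set Implicit Arguments. Unset Strict Implicit. Unset Printing Implicit Defensive.

(* Lower bound: a geodesic has no repeated vertex, so each of its edges other
   than the first and the last has two endpoints of degree at least 2; hence a
   geodesic carries at most two pendant edges and the pendant edges form an
   edge general position set.
   Upper bound: deleting an edge uv of the tree T leaves the branch of u and the
   branch of v. If S is an edge general position set containing uv, one of the
   two branches contains no other edge of S, for otherwise edges of S on both
   sides together with uv would lie on one path, which in a tree is a geodesic.
   Free branches of distinct edges of S are disjoint, and every branch contains
   a leaf of T, so sending each edge of S to the pendant edge at a leaf of its
   free branch is injective. *)

Lemma uniq_last_head (T : eqType) (x : T) s : uniq (x :: s) -> last x s = x -> s = [::].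
Proof. by case: s => //= y s /andP [xs _] lx; move: (mem_last y s); rewrite lx (negPf xs). Qed.

Lemma infix_head (T : eqType) (x y : T) s :
  uniq (x :: s) -> infix [:: x; y] (x :: s) -> y = head x s.
Proof.
case/andP => xs _ /infixP [[|z s1] [s2 /=]]; first by case=> ->.
by case=> _ Es; move: xs; rewrite Es mem_cat inE eqxx orbT.
Qed.

Lemma infix_rcons_last (T : eqType) (x y : T) s : infix [:: last x s; y] (rcons (x :: s) y).
Proof. by rewrite [x :: s]lastI -!cats1 -catA; exact: suffix_infix. Qed.

Lemma infix_enter (T : eqType) (A : pred T) x s :
  ~~ A x -> A (last x s) -> exists a b, [/\ ~~ A a, A b & infix [:: a; b] (x :: s)].
Proof.
elim: s x => [|y s IHs] x Ax; first by rewrite /= (negPf Ax).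
case Ay: (A y).
  by exists x, y; split => //; exact: (prefix_infix [:: x; y] s).
move=> /(IHs _ (negbT Ay)) [a [b [Aa Ab ab]]].
by exists a, b; split => //; exact: infix_catl [:: x] ab.
Qed.

Lemma cards3 (T : finType) (a b c : T) :
  a != b -> a != c -> b != c -> #|[set a; b; c]| = 3.
Proof. by move=> ab ac bc; rewrite -setUA cardsU1 cards2 bc !inE negb_or ab ac. Qed.

Lemma leq_card_rel (T1 T2 : finType) (A : {set T1}) (B : {set T2})
    (R : T1 -> T2 -> bool) :
  (forall x, x \in A -> exists2 y, y \in B & R x y) ->
  (forall x1 x2 y, x1 \in A -> x2 \in A -> y \in B -> R x1 y -> R x2 y -> x1 = x2) ->
  #|A| <= #|B|.
Proof.
move=> RA Rinj; case: (set_0Vmem A) => [->|[x0 /RA [y0 _ _]]]; first by rewrite cards0.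
pose h x := odflt y0 [pick y in B | R x y].
have hP x : x \in A -> (h x \in B) && R x (h x).
  by move=> /RA [y yB Rxy]; rewrite /h; case: pickP => [//|/(_ y)]; rewrite yB Rxy.
have h_inj : {in A &, injective h}.
  move=> x1 x2 A1 A2 h12; have /andP [B1 R1] := hP _ A1; have /andP [_ R2] := hP _ A2.
  by apply: Rinj A1 A2 B1 R1 _; rewrite h12.
rewrite -(card_in_imset h_inj); apply/subset_leq_card/subsetP.
by move=> _ /imsetP [x /hP /andP [? _] ->].
Qed.

Section Graph.
Variables (V : finType) (e : rel V).

Definition seq_edge (s : seq V) (f : {set V}) :=
  exists a b, f = [set a; b] /\ infix [:: a; b] s.

Lemma seq_edge_infix s t f : infix s t -> seq_edge s f -> seq_edge t f.
Proof. by move=> st [a [b [-> ab]]]; exists a, b; split; last exact: infix_trans st. Qed.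

Lemma seq_edge_rev s f : seq_edge s f -> seq_edge (rev s) f.
Proof. by move=> [a [b [-> ab]]]; exists b, a; rewrite setUC -infix_rev revK. Qed.

Lemma walk_edgesP x p f : reflect (seq_edge (x :: p) f) (f \in walk_edges x p).
Proof.
elim: p x => [|y p IHp] x.
  by apply: (iffP idP) => // -[a [b [_ /=]]]; rewrite andbF.
have -> : walk_edges x (y :: p) = [set x; y] :: walk_edges y p by [].
rewrite inE; apply: (iffP orP) => [[/eqP ->|/IHp]|[a [b [Ef ab]]]].
- by exists x, y; split => //; exact: (prefix_infix [:: x; y] p).
- exact: seq_edge_infix (infix_cons _ _).
move: ab; rewrite infix_consl !prefix_cons prefix0s andbT.
case/orP => [/andP [/eqP xa /eqP yb]|ab]; first by left; rewrite Ef xa yb.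
by right; apply/IHp; exists a, b.
Qed.

Lemma edgesP f : reflect (exists a b, e a b /\ f = [set a; b]) (f \in edges e).
Proof.
rewrite inE; apply: (iffP existsP) => [[a /existsP [b /andP [ab /eqP ->]]]|[a [b [ab ->]]]].
  by exists a, b.
by exists a; apply/existsP; exists b; rewrite ab eqxx.
Qed.

Lemma geodesic_uniq x p : geodesic e x p -> uniq (x :: p).
Proof.
case=> pe p_min; case: (shortenP pe) p_min => q qe Uq sub_qp /(_ q qe erefl) le_pq.
apply: (leq_size_uniq Uq) => [z|]; last by rewrite /= ltnS.
by rewrite !inE => /orP [->|/sub_qp ->]; rewrite ?orbT.
Qed.

Lemma degree_gt1 a b c : e a b -> e a c -> b != c -> 1 < degree e a.
Proof.
move=> ab ac bc; apply: leq_trans (subset_leq_card (_ : [set b; c] \subset _)).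
  by rewrite cards2 bc.
by apply/subsetP => y; rewrite !inE => /orP [] /eqP ->.
Qed.

Hypothesis e_sym : symmetric e.

Lemma sorted_rev_sym s : sorted e (rev s) = sorted e s.
Proof. by rewrite rev_sorted; case: s => //= x s; apply: eq_path => a b; rewrite e_sym. Qed.

Lemma rev_path_sym x p : path e x p -> path e (last x p) (rev (belast x p)).
Proof. by move=> pe; rewrite rev_path (@eq_path _ _ e) // => a b; rewrite e_sym. Qed.

Lemma edges_adj f x y : f \in edges e -> x \in f -> y \in f -> x != y -> e x y.
Proof.
case/edgesP => a [b [ab ->]]; rewrite !inE.
by case/orP => /eqP ->; case/orP => /eqP ->; rewrite ?eqxx // e_sym.
Qed.

(* The two edges on the right are the first and the last edge of the walk. *)
Lemma pendant_walk_edges_ends x p : path e x p -> uniq (x :: p) ->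
  [set f in pendant_edges e | f \in walk_edges x p]
    \subset [set [set x; head x p]; [set last x (belast x p); last x p]].
Proof.
move=> pe Up; apply/subsetP => f; rewrite inE => /andP [].
rewrite inE => /andP [_ /existsP [z /andP [zf /eqP dz]]].
case/walk_edgesP => a [b [Ef /infixP [s1 [s2 Es]]]]; rewrite !inE Ef.
case/lastP: s1 Es => [[-> ->]|s1 c Es]; first by rewrite eqxx.
case: s2 Es => [|d s2] Es.
  move: Es; rewrite lastI cats0 -cat1s catA !cats1 => /rcons_inj [-> ->].
  by rewrite last_rcons eqxx orbT.
have sub : infix [:: c; a; b; d] (x :: p).
  by rewrite Es cat_rcons; exact: infix_infix s1 [:: c; a; b; d] s2.
have /and3P [ca ab bd] : [&& e c a, e a b & e b d].
  by have := infix_sorted sub pe; rewrite /= andbT.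
have : uniq [:: c; a; b; d] := infix_uniq sub Up.
rewrite /= !inE !negb_or => /andP [/and3P [_ cb _] /andP [/andP [_ ad] _]].
move: zf dz; rewrite Ef !inE => /orP [] /eqP -> d1.
  have ac : e a c by rewrite e_sym.
  by have := degree_gt1 ab ac; rewrite d1 eq_sym => /(_ cb).
have ba : e b a by rewrite e_sym.
by have := degree_gt1 ba bd ad; rewrite d1.
Qed.

Lemma pendant_edges_gp : edge_gp_set e (pendant_edges e).
Proof.
split; first by apply/subsetP => f; rewrite inE => /andP [].
move=> x p /[dup] /geodesic_uniq Up [pe _].
apply: leq_ltn_trans (subset_leq_card (pendant_walk_edges_ends pe Up)) _.
by rewrite cards2; case: (_ != _).
Qed.

Section Acyclic.
Hypothesis e_acyc : acyclic e.

Lemma acyclic_disjoint_paths x w p q :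
  path e x (rcons p w) -> uniq (x :: rcons p w) ->
  path e x (rcons q w) -> uniq (x :: rcons q w) ->
  ~~ has (mem q) p -> p = [::] /\ q = [::].
Proof.
move=> pe Up qe Uq pq; set c := x :: p ++ w :: rev q.
have c_cycle : cycle e c.
  rewrite /c /cycle rcons_cat /= -rev_cons -cat_rcons cat_path pe last_rcons.
  by have := rev_path_sym qe; rewrite last_rcons belast_rcons.
have c_uniq : uniq c.
  rewrite /c -cat_rcons -cat_cons cat_uniq Up rev_uniq.
  move: Uq; rewrite /= mem_rcons inE negb_or rcons_uniq => /andP [/andP [_ xq] /andP [wq ->]].
  rewrite andbT; apply/hasPn => z; rewrite mem_rev => zq.
  rewrite inE mem_rcons inE !negb_or; apply/and3P; split.
  - by apply: contraNneq xq => <-.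
  - by apply: contraNneq wq => <-.
  - by apply: contraNN pq => zp; apply/hasP; exists z.
have [c3|] := leqP 3 (size c); first by have := e_acyc c3 c_uniq; rewrite c_cycle.
rewrite /c /= size_cat /= size_rev => c3; split; apply/nilP; rewrite /nilp; lia.
Qed.

Lemma acyclic_path_unique x p q :
  path e x p -> uniq (x :: p) -> path e x q -> uniq (x :: q) -> last x p = last x q -> p = q.
Proof.
elim: p x q => [|y p IHp] x q pe Up qe Uq lpq; first by rewrite (uniq_last_head Uq (esym lpq)).
case: q qe Uq lpq => [_ _ lx|z q qe Uq lpq]; first by have := uniq_last_head Up lx.
(* w is the first vertex of y :: p on z :: q; the two paths from x to w meet only
   at their ends, so acyclicity forces both to be the single edge xw. *)
have [w [p1 [p2 [wq p1q Ep]]]] : exists w p1 p2,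
    [/\ w \in z :: q, ~~ has (mem (z :: q)) p1 & y :: p = rcons p1 w ++ p2].
  have : has (mem (z :: q)) (y :: p).
    by apply/hasP; exists (last y p); rewrite ?mem_last //; move: lpq => /= ->; exact: mem_last.
  by case/split_find => w p1 p2 *; exists w, p1, p2.
have [q1 [q2 Eq]] : exists q1 q2, z :: q = rcons q1 w ++ q2.
  by case/splitPr: wq => q1 q2; exists q1, q2; rewrite cat_rcons.
have [p10 q10] : p1 = [::] /\ q1 = [::].
  move: pe Up qe Uq; rewrite Ep Eq -!cat_cons !cat_path !cat_uniq.
  move=> /andP [pe1 _] /andP [Up1 _] /andP [qe1 _] /andP [Uq1 _].
  apply: acyclic_disjoint_paths pe1 Up1 qe1 Uq1 _; apply: contra p1q.
  apply: sub_has => u; change (u \in q1 -> u \in z :: q) => uq1.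
  by rewrite Eq mem_cat mem_rcons inE uq1 orbT.
move: Ep Eq; rewrite p10 q10 => -[yw pp2] [zw qq2]; subst w p2 q2 z.
move: pe Up qe Uq lpq => /andP [_ pe] /andP [_ Up] /andP [_ qe] /andP [_ Uq] /= lpq.
by rewrite (IHp y q pe Up qe Uq lpq).
Qed.

Section Tree.
Hypotheses (e_irr : irreflexive e) (e_conn : connected_graph e).

Lemma tree_path_exists u w : exists p, [&& path e u p, uniq (u :: p) & last u p == w].
Proof.
have /connectP [p pe ->] := e_conn u w.
by case: (shortenP pe) => q qe Uq _; exists q; rewrite qe Uq eqxx.
Qed.

Definition tree_path u w := xchoose (tree_path_exists u w).

Lemma path_tree_path u w : path e u (tree_path u w).
Proof. by case/and3P: (xchooseP (tree_path_exists u w)). Qed.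

Lemma uniq_tree_path u w : uniq (u :: tree_path u w).
Proof. by case/and3P: (xchooseP (tree_path_exists u w)). Qed.

Lemma last_tree_path u w : last u (tree_path u w) = w.
Proof. by apply/eqP; case/and3P: (xchooseP (tree_path_exists u w)). Qed.

Lemma tree_path_unique u p : path e u p -> uniq (u :: p) -> tree_path u (last u p) = p.
Proof.
move=> pe Up.
exact: acyclic_path_unique (path_tree_path _ _) (uniq_tree_path _ _) pe Up (last_tree_path _ _).
Qed.

Lemma tree_path_id u : tree_path u u = [::].
Proof. exact: (@tree_path_unique u [::]). Qed.

Lemma tree_path_edge u v : e u v -> tree_path u v = [:: v].
Proof.
move=> uv; apply: (@tree_path_unique u [:: v]); first by rewrite /= uv.
by rewrite /= inE andbT; apply: contraTneq uv => ->; rewrite e_irr.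
Qed.

Lemma tree_path_prefix u a b :
  b \in u :: tree_path u a -> exists s, tree_path u a = tree_path u b ++ s.
Proof.
move=> ba; move: (path_tree_path u a) (uniq_tree_path u a).
case/splitPl: ba => p1 p2 <- pe Up; exists p2; rewrite tree_path_unique //.
  by move: pe; rewrite cat_path => /andP [].
by move: Up; rewrite -cat_cons cat_uniq => /andP [].
Qed.

Lemma tree_path_adj u a b : e a b ->
  tree_path u b = rcons (tree_path u a) b \/ tree_path u a = rcons (tree_path u b) a.
Proof.
have extend c d : e c d -> d \notin u :: tree_path u c ->
    tree_path u d = rcons (tree_path u c) d.
  move=> cd dc; rewrite -{1}(last_rcons u (tree_path u c) d) tree_path_unique //.
    by rewrite rcons_path path_tree_path last_tree_path.
  by rewrite -rcons_cons rcons_uniq dc uniq_tree_path.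
move=> ab; have [ba|] := boolP (b \in u :: tree_path u a); last by left; apply: extend.
have [ab'|] := boolP (a \in u :: tree_path u b); last by right; apply: extend; rewrite // e_sym.
have [s Ea] := tree_path_prefix ba; have [t Eb] := tree_path_prefix ab'.
have s0 : s = [::].
  by apply/nilP; move: (congr1 size Ea) (congr1 size Eb); rewrite !size_cat /nilp; lia.
by move: (e_irr a); rewrite -{2}(last_tree_path u a) Ea s0 cats0 last_tree_path ab.
Qed.

Lemma uniq_path_geodesic u p : path e u p -> uniq (u :: p) -> geodesic e u p.
Proof.
move=> pe Up; split => // q qe; case: (shortenP qe) => q' qe' Uq' sub_q lq.
have <- : q' = p by rewrite -(tree_path_unique qe' Uq') lq tree_path_unique.
by apply: uniq_leq_size sub_q; case/andP: Uq'.
Qed.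

(* For an edge uv, the vertex set of the component of v in T - uv. *)
Definition branch u v : {set V} := [set w | (w != u) && (head u (tree_path u w) == v)].

Lemma branchP u v w : reflect (exists r, tree_path u w = v :: r) (w \in branch u v).
Proof.
rewrite inE; apply: (iffP andP) => [[wu /eqP]|[r Ew]].
  case Ew: (tree_path u w) => [|y r] /=; last by move=> ->; exists r.
  by move: wu; rewrite -(last_tree_path u w) Ew eqxx.
by rewrite Ew; split => //; apply/eqP => wu; move: Ew; rewrite wu tree_path_id.
Qed.

Lemma mem_branch_edge u v : e u v -> v \in branch u v.
Proof. by move=> uv; apply/branchP; exists [::]; exact: tree_path_edge. Qed.

Lemma branch_tree_path u v w z : w \in branch u v -> z \in tree_path u w -> z \in branch u v.
Proof.
move=> /branchP [r Ew] zw; have [s] := tree_path_prefix (@mem_behead _ (u :: _) z zw).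
case Pz: (tree_path u z) => [|y t].
  have zu : z = u by rewrite -(last_tree_path u z) Pz.
  by move: (uniq_tree_path u w); rewrite /= -{1}zu zw.
by rewrite Ew => -[vy _]; apply/branchP; exists t; rewrite Pz vy.
Qed.

Lemma branch_disjoint u v w : w \in branch u v -> w \notin branch v u.
Proof.
move=> /branchP [r Ew]; apply/branchP => -[r' Ew'].
move: (path_tree_path u w) (uniq_tree_path u w) (last_tree_path u w).
rewrite Ew /= => /andP [_ pr] /andP [ur Ur] lw.
move: (tree_path_unique pr Ur); rewrite lw Ew' => r_eq.
by move: ur; rewrite -r_eq !inE eqxx orbT.
Qed.

Lemma branch_boundary u v a b :
  a \in branch u v -> e a b -> b \notin branch u v -> a = v /\ b = u.
Proof.
move=> /branchP [r Ea] ab bB; case: (tree_path_adj u ab) => Eb.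
  by case/negP: bB; apply/branchP; exists (rcons r b); rewrite Eb Ea.
move: Eb; rewrite Ea; case Pb: (tree_path u b) => [|y t] /= [va _].
  by split; [rewrite va | rewrite -(last_tree_path u b) Pb].
by case/negP: bB; apply/branchP; exists t; rewrite Pb va.
Qed.

Lemma branch_edge_on_tree_path u v a b : e a b -> a \in branch u v -> b \in branch u v ->
  exists2 z, z \in branch u v & seq_edge (u :: tree_path u z) [set a; b].
Proof.
have on_path c d : tree_path u d = rcons (tree_path u c) d ->
    seq_edge (u :: tree_path u d) [set c; d].
  move=> Ed; exists c, d; split => //; rewrite Ed -rcons_cons -{1}(last_tree_path u c).
  exact: infix_rcons_last.
move=> ab aB bB; case: (tree_path_adj u ab) => E; first by exists b => //; apply: on_path.
by exists a => //; rewrite setUC; apply: on_path.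
Qed.

Lemma seq_edge_branch u v z : z \in branch u v -> seq_edge (u :: tree_path u z) [set u; v].
Proof. by case/branchP => r ->; exists u, v; split => //; exact: (prefix_infix [:: u; v] r). Qed.

Lemma branch_join u v z z' : z \in branch u v -> z' \in branch v u ->
  exists s, [/\ sorted e s, uniq s,
    infix (rev (v :: tree_path v z')) s & infix (u :: tree_path u z) s].
Proof.
move=> /[dup] zB /branchP [r Ez] /[dup] z'B /branchP [r' Ez'].
have := path_tree_path v z'; have := uniq_tree_path v z'.
rewrite Ez' /= => /andP [_ /andP [ur' Ur']] /andP [_ pr'].
exists (rev r' ++ u :: tree_path u z); split.
- by rewrite sorted_cat_cons -rev_cons sorted_rev_sym /= pr' path_tree_path.
- rewrite cat_uniq rev_uniq Ur' uniq_tree_path andbT andTb.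
  apply/hasPn => w; change (w \in u :: tree_path u z -> w \notin rev r'); rewrite mem_rev inE.
  case/orP => [/eqP -> //|wz]; apply: contraL (branch_tree_path zB wz) => wr'.
  by apply: branch_disjoint; apply: (branch_tree_path z'B); rewrite Ez' inE wr' orbT.
- by apply/infixP; exists [::], r; rewrite Ez /= !rev_cons -!cats1 -!catA.
- exact: suffix_infix.
Qed.

Lemma gp_set_path_edges S x p : edge_gp_set e S -> path e x p -> uniq (x :: p) ->
  #|[set f in S | f \in walk_edges x p]| < 3.
Proof. by case=> _ gpS pe Up; apply: gpS; exact: uniq_path_geodesic. Qed.

Lemma gp_set_one_side S u v g h : edge_gp_set e S -> [set u; v] \in S ->
  g \in S -> h \in S -> g != [set u; v] -> h != [set u; v] ->
  g \subset branch u v -> h \subset branch v u -> False.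
Proof.
move=> gpS fS gS hS gf hf gB hB.
case/edgesP: (subsetP gpS.1 g gS) => a [b [ab Eg]].
case/edgesP: (subsetP gpS.1 h hS) => c [d [cd Eh]].
move: (gB) (hB); rewrite Eg Eh !subUset !sub1set => /andP [aB bB] /andP [cB dB].
have [z zB gz] := branch_edge_on_tree_path ab aB bB.
have [z' z'B hz'] := branch_edge_on_tree_path cd cB dB.
have [[|x p] [ps Us ps_h ps_g]] := branch_join zB z'B; first by rewrite infixs0 in ps_g.
have gh : g != h.
  by apply: contraTneq (branch_disjoint aB) => gh; rewrite negbK (subsetP hB) // -gh Eg !inE eqxx.
have := gp_set_path_edges gpS ps Us; rewrite ltnNge => /negP; apply.
rewrite -(cards3 (_ : [set u; v] != g) (_ : [set u; v] != h) gh) 1?eq_sym //.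
apply/subset_leq_card/subsetP => k; rewrite !inE -orbA => /or3P [] /eqP ->;
  rewrite ?fS ?gS ?hS /=; apply/walk_edgesP.
- exact: seq_edge_infix ps_g (seq_edge_branch zB).
- by apply: seq_edge_infix ps_g _; rewrite Eg.
- by apply: seq_edge_infix ps_h _; rewrite Eh; exact: seq_edge_rev.
Qed.

Definition free_side (S : {set {set V}}) (f : {set V}) u v :=
  [&& e u v, f == [set u; v] & [forall g in S, (g != f) ==> ~~ (g \subset branch u v)]].

Lemma free_side_exists S f : edge_gp_set e S -> f \in S -> exists u v, free_side S f u v.
Proof.
move=> gpS fS; case/edgesP: (subsetP gpS.1 f fS) => u [v [uv Ef]].
have [Fuv|/forall_inPn [g gS]] := boolP [forall g in S, (g != f) ==> ~~ (g \subset branch u v)].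
  by exists u, v; apply/and3P; split => //; apply/eqP.
have [Fvu|/forall_inPn [h hS]] := boolP [forall h in S, (h != f) ==> ~~ (h \subset branch v u)].
  by exists v, u; apply/and3P; split; rewrite 1?e_sym //; apply/eqP; rewrite Ef setUC.
rewrite negb_imply negbK => /andP [hf hB]; rewrite negb_imply negbK => /andP [gf gB].
by case: (gp_set_one_side gpS _ gS hS _ _ gB hB); rewrite -?Ef.
Qed.

Lemma branch_entry u v x y : x \notin branch u v -> y \in branch u v ->
  infix [:: u; v] (x :: tree_path x y).
Proof.
move=> xB yB; have [|a [b [aB bB ab]]] := @infix_enter _ [in branch u v] x (tree_path x y) xB.
  by rewrite last_tree_path.
have ba : e b a by rewrite e_sym; have := infix_sorted ab (path_tree_path x y); rewrite /= andbT.
by have [<- <-] := branch_boundary bB ba aB.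
Qed.

Lemma free_sides_disjoint (S : {set {set V}}) (f f' : {set V}) u v u' v' x :
  f \in S -> f' \in S -> f != f' -> free_side S f u v -> free_side S f' u' v' ->
  x \in branch u v -> x \notin branch u' v'.
Proof.
move=> fS f'S ff' /and3P [uv /eqP Ef /forall_inP F] /and3P [_ /eqP Ef' /forall_inP F'] xB.
apply/negP => xB'; have [uB'|uB'] := boolP (u \in branch u' v').
  have [vB'|vB'] := boolP (v \in branch u' v').
    by move: (F' f fS); rewrite ff' /= Ef subUset !sub1set uB' vB'.
  have [uv' vu'] := branch_boundary uB' uv vB'.
  by move: ff'; rewrite Ef Ef' uv' vu' setUC eqxx.
have := branch_entry uB' xB'; have [u'u|u'u] := eqVneq u' u.
  rewrite u'u => /(infix_head (uniq_tree_path u x)); case/branchP: xB => r -> /= v'v.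
  by move: ff'; rewrite Ef Ef' u'u v'v eqxx.
rewrite infix_consl prefix_cons (negPf u'u) /= => /mem_infix sub.
have inB w : w \in [:: u'; v'] -> w \in branch u v by move=> /sub; exact: branch_tree_path xB.
by move: (F f' f'S); rewrite eq_sym ff' Ef' subUset !sub1set !inB ?inE ?eqxx ?orbT.
Qed.

Lemma branch_leaf u v : e u v -> exists2 w, w \in branch u v & degree e w = 1.
Proof.
move=> uv; pose dist w := size (tree_path u w).
case: (@arg_maxnP _ v [in branch u v] dist (mem_branch_edge uv)) => w wB wmax.
exists w => //; have [r Ew] := branchP _ _ _ wB.
set y := last u (belast v r).
have Ew' : tree_path u w = rcons (belast v r) w.
  have lw : last v r = w by rewrite -(last_tree_path u w) Ew.
  by rewrite Ew [v :: r]lastI lw.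
have nb z : e w z -> z = y.
  move=> wz; case: (tree_path_adj u wz) => Ez.
    have zB : z \in branch u v by apply/branchP; exists (rcons r z); rewrite Ez Ew.
    by have := wmax z zB; rewrite /= /dist Ez size_rcons ltnn.
  by move: Ez; rewrite Ew' /y => /rcons_inj [->]; rewrite last_tree_path.
have wy : e w y.
  by have := path_tree_path u w; rewrite Ew' rcons_path e_sym => /andP [].
rewrite /degree (_ : [set z | e w z] = [set y]) ?cards1 //.
by apply/setP => z; rewrite !inE; apply/idP/eqP => [/nb|->].
Qed.

Lemma gp_set_card_leq S : edge_gp_set e S -> #|S| <= #|pendant_edges e|.
Proof.
move=> gpS; pose R (f g : {set V}) :=
  [exists u, exists v, free_side S f u v && [exists w in g, w \in branch u v]].
apply: (@leq_card_rel _ _ S _ R) => [f fS|f1 f2 g f1S f2S gP].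
  have [u [v Fuv]] := free_side_exists gpS fS; have /and3P [uv _ _] := Fuv.
  have [w wB /eqP /cards1P [y Ny]] := branch_leaf uv.
  have : y \in [set z | e w z] by rewrite Ny set11.
  rewrite inE => wy.
  exists [set w; y].
    rewrite inE; apply/andP; split; first by apply/edgesP; exists w, y.
    by apply/existsP; exists w; rewrite !inE eqxx /degree Ny cards1.
  apply/existsP; exists u; apply/existsP; exists v; rewrite Fuv /=.
  by apply/exists_inP; exists w; rewrite // !inE eqxx.
move=> /existsP [u1 /existsP [v1 /andP [F1 /exists_inP [w1 w1g w1B]]]].
move=> /existsP [u2 /existsP [v2 /andP [F2 /exists_inP [w2 w2g w2B]]]].
apply/eqP; apply: contraT => f12.
have D12 := free_sides_disjoint f1S f2S f12 F1 F2.
have f21 : f2 != f1 by rewrite eq_sym.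
have D21 := free_sides_disjoint f2S f1S f21 F2 F1.
have [w12|w12] := eqVneq w1 w2; first by move: (D12 _ w1B); rewrite w12 w2B.
have g_edge : g \in edges e by move: gP; rewrite inE => /andP [].
have e12 := edges_adj g_edge w1g w2g w12.
have [w1v1 w2u1] := branch_boundary w1B e12 (D21 _ w2B).
have e21 : e w2 w1 by rewrite e_sym.
have [w2v2 w1u2] := branch_boundary w2B e21 (D12 _ w1B).
case/and3P: F1 => _ /eqP Ef1 _; case/and3P: F2 => _ /eqP Ef2 _.
by move: f12; rewrite Ef1 Ef2 -w1v1 -w2u1 -w2v2 -w1u2 setUC eqxx.
Qed.

End Tree.
End Acyclic.
End Graph.

Theorem theorem3p3 (V : finType) (e : rel V) :
  is_tree e -> gpe e = #|pendant_edges e|.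
Proof.
move=> [[e_sym e_irr] [e_conn e_acyc]]; apply/eqP; rewrite eqn_leq; apply/andP; split.
  by apply/bigmax_leqP => S /asboolP; exact: gp_set_card_leq.
by apply: leq_bigmax_cond; apply/asboolP; exact: pendant_edges_gp.
Qed.
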